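(* Let $(\mathcal{C},\mathbb{E},\mathfrak{s})$ satisfy (ET1) and (ET2), and let $\mathcal{I}$ be a special precovering ideal of $\mathcal{C}$. Then $(\mathcal{I},\mathcal{I}^{\perp_{\mathbb{E}}})$ is an $\mathbb{E}$-cotorsion pair, i.e. $\mathcal{I}={}^{\perp_{\mathbb{E}}}(\mathcal{I}^{\perp_{\mathbb{E}}})$.
   Context: $\mathcal{C}$ additive, $\mathbb{E}:\mathcal{C}^{\mathrm{op}}\times\mathcal{C}\to\mathrm{Ab}$ biadditive (ET1); for $\delta\in\mathbb{E}(C,A)$, $a:A\to A'$, $c:C'\to C$ put $a_\star\delta=\mathbb{E}(C,a)(\delta)$, $c^\star\delta=\mathbb{E}(c,A)(\delta)$. (ET2): $\mathfrak{s}$ is an additive realization (Nakaoka–Palu): each $\delta\in\mathbb{E}(C,A)$ is assigned an equivalence class of sequences $A\xrightarrow{x}B\xrightarrow{y}C$ (up to isomorphism of the middle term compatible with the maps), $0$ is realized by split sequences, realization respects direct sums, and if $a_\star\delta=c^\star\delta'$ ($a:A\to A'$, $c:C\to C'$) there is $b:B\to B'$ making the realizing sequences commute. Realized pairs are $\mathbb{E}$-triangles $A\to B\to C\overset{\delta}{\dashrightarrow}$; such $(a,b,c)$ are morphisms of $\mathbb{E}$-triangles. An ideal: class of morphisms with zeros, closed under sums and two-sided composition. For a class $\mathcal{M}$ of morphisms: $\mathcal{M}^{\perp_{\mathbb{E}}}=\{g:A\to Y\mid m^\star g_\star\delta=0\ \forall m\in\mathcal{M},\,m:X\to C,\ \forall\delta\in\mathbb{E}(C,A)\}$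 and ${}^{\perp_{\mathbb{E}}}\mathcal{M}=\{g:X\to C\mid g^\star m_\star\delta=0\ \forall m\in\mathcal{M},\,m:A\to Y,\ \forall\delta\in\mathbb{E}(C,A)\}$. An $\mathbb{E}$-cotorsion pair is a pair of ideals $(\mathcal{I},\mathcal{J})$ with $\mathcal{I}={}^{\perp_{\mathbb{E}}}\mathcal{J}$ and $\mathcal{J}=\mathcal{I}^{\perp_{\mathbb{E}}}$. A special $\mathcal{I}$-precover of $C$ is $i:X\to C$ in $\mathcal{I}$ with $\mathbb{E}$-triangles $A\to B\to C\overset{\delta}{\dashrightarrow}$, $A'\to X\xrightarrow{i}C\overset{\delta'}{\dashrightarrow}$ and a morphism of $\mathbb{E}$-triangles $(j,b,\mathrm{id}_C)$ between them with $j\in\mathcal{I}^{\perp_{\mathbb{E}}}$. $\mathcal{I}$ is special precovering if every object has a special $\mathcal{I}$-precover. *)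

From HB Require Import structures.
From mathcomp Require Import all_boot all_algebra.
Set Implicit Arguments. Unset Strict Implicit. Unset Printing Implicit Defensive.
Import GRing.Theory.
Local Open Scope ring_scope.

Record PreAddCat := {
  Obj :> Type;
  Hom : Obj -> Obj -> zmodType;
  comp : forall A B C : Obj, Hom B C -> Hom A B -> Hom A C;
  idm : forall A : Obj, Hom A A;
  comp_assoc : forall (A B C D : Obj) (h : Hom C D) (g : Hom B C) (f : Hom A B),
    comp h (comp g f) = comp (comp h g) f;
  comp_id_l : forall (A B : Obj) (f : Hom A B), comp (idm B) f = f;
  comp_id_r : forall (A B : Obj) (f : Hom A B), comp f (idm A) = f;
  comp_addl : forall (A B C : Obj) (g g' : Hom B C) (f : Hom A B),
    comp (g + g') f = comp g f + comp g' f;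
  comp_addr : forall (A B C : Obj) (g : Hom B C) (f f' : Hom A B),
    comp g (f + f') = comp g f + comp g f'
}.
Arguments Hom {p}.
Arguments comp {p A B C}.
Arguments idm {p}.

Section Cat.
Variable C : PreAddCat.

Definition is_iso (A B : C) (f : Hom A B) : Prop :=
  exists g : Hom B A, comp g f = idm A /\ comp f g = idm B.

Definition is_biprod (A B S : C) (i1 : Hom A S) (i2 : Hom B S)
  (p1 : Hom S A) (p2 : Hom S B) : Prop :=
  [/\ comp p1 i1 = idm A, comp p2 i2 = idm B, comp p1 i2 = 0,
      comp p2 i1 = 0 & comp i1 p1 + comp i2 p2 = idm S].

Definition is_additive : Prop :=
  (exists Z : C, idm Z = 0) /\
  (forall A B : C, exists (S : C) (i1 : Hom A S) (i2 : Hom B S)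
     (p1 : Hom S A) (p2 : Hom S B), is_biprod i1 i2 p1 p2).
End Cat.

(** (ET1): a biadditive functor  E : C^op x C -> Ab.
    [Ext C A] is E(C,A); [push a] is a_* = E(C,a), [pull c] is c^* = E(c,A). *)
Record ExtFunctor (C : PreAddCat) := {
  Ext : C -> C -> zmodType;
  push : forall (Cc A A' : C), Hom A A' -> Ext Cc A -> Ext Cc A';
  pull : forall (Cc Cc' A : C), Hom Cc' Cc -> Ext Cc A -> Ext Cc' A;
  push_add : forall Cc A A' (a : Hom A A') (d d' : Ext Cc A),
    push a (d + d') = push a d + push a d';
  pull_add : forall Cc Cc' A (c : Hom Cc' Cc) (d d' : Ext Cc A),
    pull c (d + d') = pull c d + pull c d';
  push_addm : forall Cc A A' (a a' : Hom A A') (d : Ext Cc A),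
    push (a + a') d = push a d + push a' d;
  pull_addm : forall Cc Cc' A (c c' : Hom Cc' Cc) (d : Ext Cc A),
    pull (c + c') d = pull c d + pull c' d;
  push_id : forall Cc A (d : Ext Cc A), push (idm A) d = d;
  pull_id : forall Cc A (d : Ext Cc A), pull (idm Cc) d = d;
  push_comp : forall Cc A A' A'' (a : Hom A A') (a' : Hom A' A'') (d : Ext Cc A),
    push (comp a' a) d = push a' (push a d);
  pull_comp : forall Cc Cc' Cc'' A (c : Hom Cc' Cc) (c' : Hom Cc'' Cc') (d : Ext Cc A),
    pull (comp c c') d = pull c' (pull c d);
  push_pull : forall Cc Cc' A A' (a : Hom A A') (c : Hom Cc' Cc) (d : Ext Cc A),
    push a (pull c d) = pull c (push a d)
}.
Arguments Ext {C}.
Arguments push {C e Cc A A'}.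
Arguments pull {C e Cc Cc' A}.

Section ET2.
Variables (C : PreAddCat) (E : ExtFunctor C).

(** A candidate realization: [s d x y] means the sequence  A -x-> B -y-> Cc
    belongs to the equivalence class s(d) assigned to d in E(Cc,A). *)
Definition realization :=
  forall (Cc A : C), Ext E Cc A -> forall B : C, Hom A B -> Hom B Cc -> Prop.

Definition seq_equiv (A B B' Cc : C) (x : Hom A B) (y : Hom B Cc)
  (x' : Hom A B') (y' : Hom B' Cc) : Prop :=
  exists b : Hom B B', is_iso b /\ comp b x = x' /\ comp y' b = y.

Definition ET2 (s : realization) : Prop :=
  (* each d is assigned exactly one equivalence class of sequences *)
  (forall Cc A (d : Ext E Cc A), exists B (x : Hom A B) (y : Hom B Cc), s _ _ d B x y) /\
  (forall Cc A (d : Ext E Cc A) B B' (x : Hom A B) (y : Hom B Cc)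
     (x' : Hom A B') (y' : Hom B' Cc),
     s _ _ d B x y -> s _ _ d B' x' y' -> seq_equiv x y x' y') /\
  (forall Cc A (d : Ext E Cc A) B B' (x : Hom A B) (y : Hom B Cc)
     (x' : Hom A B') (y' : Hom B' Cc),
     s _ _ d B x y -> seq_equiv x y x' y' -> s _ _ d B' x' y') /\
  (forall (Cc A S : C) (i1 : Hom A S) (i2 : Hom Cc S) (p1 : Hom S A) (p2 : Hom S Cc),
     is_biprod i1 i2 p1 p2 -> s _ _ (0 : Ext E Cc A) S i1 p2) /\
  (* realization respects direct sums *)
  (forall (Cc A B Cc' A' B' SA SB SC : C)
     (d : Ext E Cc A) (x : Hom A B) (y : Hom B Cc)
     (d' : Ext E Cc' A') (x' : Hom A' B') (y' : Hom B' Cc')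
     (iA : Hom A SA) (iA' : Hom A' SA) (pA : Hom SA A) (pA' : Hom SA A')
     (iB : Hom B SB) (iB' : Hom B' SB) (pB : Hom SB B) (pB' : Hom SB B')
     (iC : Hom Cc SC) (iC' : Hom Cc' SC) (pC : Hom SC Cc) (pC' : Hom SC Cc'),
     is_biprod iA iA' pA pA' -> is_biprod iB iB' pB pB' -> is_biprod iC iC' pC pC' ->
     s _ _ d B x y -> s _ _ d' B' x' y' ->
     s _ _ (push iA (pull pC d) + push iA' (pull pC' d')) SB
       (comp iB (comp x pA) + comp iB' (comp x' pA'))
       (comp iC (comp y pB) + comp iC' (comp y' pB'))) /\
  (* morphisms of extensions lift to the realizing sequences *)
  (forall (Cc A B Cc' A' B' : C) (d : Ext E Cc A) (d' : Ext E Cc' A')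
     (a : Hom A A') (c : Hom Cc Cc')
     (x : Hom A B) (y : Hom B Cc) (x' : Hom A' B') (y' : Hom B' Cc'),
     push a d = pull c d' -> s _ _ d B x y -> s _ _ d' B' x' y' ->
     exists b : Hom B B', comp b x = comp x' a /\ comp y' b = comp c y).

Definition mclass := forall A B : C, Hom A B -> Prop.

Definition is_ideal (I : mclass) : Prop :=
  [/\ forall A B : C, I A B 0,
      forall (A B : C) (f g : Hom A B), I A B f -> I A B g -> I A B (f + g)
    & forall (A B B' D : C) (h : Hom B' D) (f : Hom B B') (g : Hom A B),
        I B B' f -> I A D (comp h (comp f g))].

Definition rperp (M : mclass) : mclass :=
  fun (A Y : C) (g : Hom A Y) =>
    forall (X Cc : C) (m : Hom X Cc), M X Cc m ->
    forall d : Ext E Cc A, pull m (push g d) = 0.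

Definition lperp (M : mclass) : mclass :=
  fun (X Cc : C) (g : Hom X Cc) =>
    forall (A Y : C) (m : Hom A Y), M A Y m ->
    forall d : Ext E Cc A, pull g (push m d) = 0.

Definition same_class (I J : mclass) : Prop :=
  forall (A B : C) (f : Hom A B), I A B f <-> J A B f.

Definition cotorsion_pair (I J : mclass) : Prop :=
  [/\ is_ideal I, is_ideal J, same_class I (lperp J) & same_class J (rperp I)].

Definition special_precover (s : realization) (I : mclass) (Cc X : C)
  (i : Hom X Cc) : Prop :=
  I X Cc i /\
  exists (A B A' : C) (d : Ext E Cc A) (x : Hom A B) (y : Hom B Cc)
         (d' : Ext E Cc A') (x' : Hom A' X) (j : Hom A A') (b : Hom B X),
    [/\ s _ _ d B x y, s _ _ d' X x' i,
        (* (j, b, id_Cc) is a morphism of E-triangles *)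
        [/\ push j d = pull (idm Cc) d', comp b x = comp x' j
           & comp i b = comp (idm Cc) y]
      & rperp I j].

Definition special_precovering (s : realization) (I : mclass) : Prop :=
  forall Cc : C, exists (X : C) (i : Hom X Cc), special_precover s I i.
End ET2.

(** The inclusion I ⊆ ⊥(I⊥) is formal. Conversely, let g : X → C lie in
    ⊥(I⊥) and take a special I-precover i : X' → C, realizing δ' and receiving
    the morphism of E-triangles (j, b, 1) from δ with j ∈ I⊥. Then
    g^* δ' = g^* j_* δ = 0, so the lifting axiom of (ET2), applied against the
    split sequence realizing 0, factors g through the deflation i; hence g ∈ I
    because I is an ideal. *)
From Pilot Require Import Defs.
From mathcomp Require Import all_boot all_algebra.
Set Implicit Arguments. Unset Strict Implicit. Unset Printing Implicit Defensive.
Import GRing.Theory.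
Local Open Scope ring_scope.

Lemma morph_add0 (U V : zmodType) (f : U -> V) :
  {morph f : x y / x + y} -> f 0 = 0.
Proof.
move=> fD; have := congr1 (fun z => z - f 0) (fD 0 0).
by rewrite /= addr0 addrK subrr => ->.
Qed.

Section ExtFunctorTheory.
Variables (C : PreAddCat) (E : ExtFunctor C).

Lemma push0 (Cc A A' : C) (a : Defs.Hom A A') : push a (0 : Ext E Cc A) = 0.
Proof. exact/morph_add0/push_add. Qed.

Lemma pull0 (Cc Cc' A : C) (c : Defs.Hom Cc' Cc) : pull c (0 : Ext E Cc A) = 0.
Proof. exact/morph_add0/pull_add. Qed.

Lemma push0m (Cc A A' : C) (d : Ext E Cc A) : push (0 : Defs.Hom A A') d = 0.
Proof. by apply: (@morph_add0 _ _ (push^~ d)) => a a'; apply: push_addm. Qed.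

Lemma rperp_ideal (M : mclass C) : is_ideal (rperp E M).
Proof.
split.
- by move=> A B X Cc m _ d; rewrite push0m pull0.
- move=> A B f g Mf Mg X Cc m Mm d.
  by rewrite push_addm pull_add Mf // Mg // addr0.
- move=> A B B' D h f g Mf X Cc m Mm d.
  by rewrite !push_comp -push_pull Mf // push0.
Qed.

Lemma sub_lperp_rperp (M : mclass C) (A B : C) (f : Defs.Hom A B) :
  M A B f -> lperp E (rperp E M) f.
Proof. by move=> Mf X Y m Mm d; apply: Mm. Qed.

Lemma ideal_compr (I : mclass C) (A B D : C) (f : Defs.Hom B D) (g : Defs.Hom A B) :
  is_ideal I -> I B D f -> I A D (Defs.comp f g).
Proof.
case=> _ _ Icomp If.
by rewrite -[Defs.comp f g]comp_id_l; apply: Icomp.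
Qed.

Section Realization.
Variables (s : realization E) (Hs : ET2 s) (Hadd : is_additive C).

Lemma deflation_factor (Cc A X Y : C) (d : Ext E Cc A) (x : Defs.Hom A X)
    (i : Defs.Hom X Cc) (g : Defs.Hom Y Cc) :
  s d x i -> pull g d = 0 -> exists h : Defs.Hom Y X, Defs.comp i h = g.
Proof.
move=> sd gd0.
case: Hadd => _ /(_ A Y) [S [i1 [i2 [p1 [p2 bpS]]]]].
case: Hs => _ [_ [_ [split0 [_ lift]]]].
have triangle_map : push (idm A) (0 : Ext E Y A) = pull g d by rewrite push0 gd0.
have [h [_ ih]] := lift _ _ _ _ _ _ _ _ _ _ _ _ _ _ triangle_map (split0 _ _ _ _ _ _ _ bpS) sd.
exists (Defs.comp h i2).
by case: bpS => _ p2i2 _ _ _; rewrite comp_assoc ih -comp_assoc p2i2 comp_id_r.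
Qed.

Lemma lperp_rperp_factor (I : mclass C) (Cc X Y : C) (i : Defs.Hom X Cc)
    (g : Defs.Hom Y Cc) :
  special_precover s I i -> lperp E (rperp E I) g ->
  exists h : Defs.Hom Y X, Defs.comp i h = g.
Proof.
move=> [_ [A [B [A' [d [x [y [d' [x' [j [b [_ sd' [jd _ _] Ij]]]]]]]]]]]] g_perp.
apply: deflation_factor sd' _.
by rewrite -[d']pull_id -jd g_perp.
Qed.

End Realization.
End ExtFunctorTheory.

Theorem theorem3p8 (C : PreAddCat) (Hadd : is_additive C) (E : ExtFunctor C)
  (s : realization E) (Hs : ET2 s) (I : mclass C) (HI : is_ideal I)
  (Hsp : special_precovering s I) :
  cotorsion_pair E I (rperp E I).
Proof.
split=> //; first exact: rperp_ideal.
move=> Y Cc g; split; first exact: sub_lperp_rperp.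
move=> g_perp; have [X [i i_spec]] := Hsp Cc.
have [h <-] := lperp_rperp_factor Hs Hadd i_spec g_perp.
exact: ideal_compr i_spec.1.
Qed.
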